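(* Let $R$ be a finite rod set not equivalent to the empty rod set, and let $a$ be a positive integer. There exist a finite rod set $Q$ and a rod set $S$ of shape $\langle a\rangle$ with $R\xrightarrow{Q}S$ if and only if $$F(a-i,R)=0\ \text{ for } i=1,2,\dots,\max R-1\quad\text{and}\quad F(a,R)\neq0.$$ In that case $C(a,S)=F(a,R)$.
   Context: A rod is a triple $(r,c,\varepsilon)$ with $r$ a positive integer (length), $c$ a tag (color), $\varepsilon\in\{\pm1\}$ (sign); antirods have sign $-1$. A rod set is a set of rods with finitely many of each length. $C(n,R)$ = (number of positive rods of length $n$) $-$ (number of antirods of length $n$); $R\equiv S$ means $C(n,R)=C(n,S)$ for all $n>0$; each class has a unique reduced member (no rod and antirod of the same length). $R$ is finite if its reduced equivalent is finite; $\max R$ is the largest length in it. The shape of $S$ is the set of lengths $n$ with $C(n,S)\ne0$; ''$S$ has shape $\langle a\rangle$'' means this set is $\{a\}$. A train built from $R$ is a finite sequence of rods of $R$ (including the empty train), with length the sum of lengths and sign the product of signs; $F(n,R)$ is the number of positive minus negative trains of length $n$, with $F(0,R)=1$, $F(n,R)=0$ for $n<0$. Unions are disjoint unions; $\overline{Q}$ reverses all signs; $QR$ has one rod per pair $(q,r)\in Q\times R$ of length $\operatorname{len}q+\operatorname{len}r$ and sign $\operatorname{sign}q\operatorname{sign}r$. $R\xrightarrow{Q}S$ means $S\equiv R\cup\overline{Q}\cup QR$. *)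

From mathcomp Require Import all_boot all_order all_algebra.
Set Implicit Arguments. Unset Strict Implicit. Unset Printing Implicit Defensive.
Import Order.TTheory GRing.Theory Num.Theory.

(* A rod set, up to renaming of colours: for every length n > 0, the number
   [npos R n] of positive rods and the number [nneg R n] of antirods of
   length n (finitely many of each length).  The rods of R are the triples
   (n, c, +1) with c < npos R n and (n, c, -1) with c < nneg R n, n > 0.
   Values at length 0 are irrelevant (rods have positive length) and are
   ignored by every definition below. *)
Record rodset := RodSet { npos : nat -> nat ; nneg : nat -> nat }.

Definition rod_empty : rodset := RodSet (fun _ => 0%N) (fun _ => 0%N).

Definition Ccount (R : rodset) (n : nat) : int := (npos R n)%:Z - (nneg R n)%:Z.

Definition rod_equiv (R S : rodset) : Prop :=
  forall n, (0 < n)%N -> Ccount R n = Ccount S n.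

Definition rod_union (R S : rodset) : rodset :=
  RodSet (fun n => npos R n + npos S n)%N (fun n => nneg R n + nneg S n)%N.

Definition rod_bar (Q : rodset) : rodset := RodSet (nneg Q) (npos Q).

(* QR : one rod per pair (q,r), length len q + len r, sign sign q * sign r *)
Definition rod_prod (Q R : rodset) : rodset :=
  RodSet
    (fun n => \sum_(1 <= k < n) (npos Q k * npos R (n - k) + nneg Q k * nneg R (n - k)))%N
    (fun n => \sum_(1 <= k < n) (npos Q k * nneg R (n - k) + nneg Q k * npos R (n - k)))%N.

(* R is finite: its reduced equivalent is finite, i.e. C(n,R) = 0 for all
   large n. *)
Definition rod_finite (R : rodset) : Prop :=
  exists N : nat, forall n, (N < n)%N -> Ccount R n = 0.

(* m = max R : the largest length occurring in the reduced equivalent of R. *)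
Definition is_max_len (R : rodset) (m : nat) : Prop :=
  (0 < m)%N /\ Ccount R m != 0 /\ forall n, (m < n)%N -> Ccount R n = 0.

Definition has_shape1 (S : rodset) (a : nat) : Prop :=
  forall n, (0 < n)%N -> (Ccount S n != 0 <-> n = a).

(* Counting trains (finite sequences of rods of R) of total length n,
   separately by sign: decomposing a nonempty train into its first rod (of
   length l, 1 <= l <= n) followed by a train of length n - l.  [fuel] only
   ensures termination; the result is meaningful for n <= fuel.
   Output: (number of positive trains, number of negative trains). *)
Fixpoint trainsPN (R : rodset) (fuel n : nat) : nat * nat :=
  match fuel with
  | 0 => if n == 0 then (1, 0)%N else (0, 0)%N
  | f.+1 =>
      if n == 0 then (1, 0)%N else
      ((\sum_(1 <= l < n.+1)
          (npos R l * (trainsPN R f (n - l)).1 + nneg R l * (trainsPN R f (n - l)).2))%N,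
       (\sum_(1 <= l < n.+1)
          (npos R l * (trainsPN R f (n - l)).2 + nneg R l * (trainsPN R f (n - l)).1))%N)
  end.

(* F(n,R) for integer n: positive minus negative trains of length n;
   F(0,R) = 1 and F(n,R) = 0 for n < 0. *)
Definition Ftrains (R : rodset) (n : int) : int :=
  match n with
  | Posz k => ((trainsPN R k k).1)%:Z - ((trainsPN R k k).2)%:Z
  | Negz _ => 0
  end.

Definition rod_arrow (R Q S : rodset) : Prop :=
  rod_equiv S (rod_union (rod_union R (rod_bar Q)) (rod_prod Q R)).

From mathcomp Require Import all_boot all_order all_algebra.
From mathcomp Require Import zify ring.
Import Order.TTheory GRing.Theory Num.Theory.
Local Open Scope ring_scope.

(* Write r(x) = sum_n C(n,R) x^n, q(x) = sum_n C(n,Q) x^n and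
   s(x) = sum_n C(n,S) x^n.  Then R --Q--> S says 1 - s = (1 + q)(1 - r), while
   the trains satisfy sum_n F(n,R) x^n = 1/(1 - r).  If S has shape <a>, then
   1 + q = (1 - s)/(1 - r) agrees with the train series below degree a; it is a
   polynomial whose degree d satisfies d + max R = a, which forces the gap of
   zeros of F(., R) just below a, and comparing coefficients of x^a gives
   C(a,S) = F(a,R).  Conversely, truncating the train series at degree
   a - max R yields a suitable polynomial 1 + q. *)

Lemma Posz_sum_cross lo hi (a b c d : nat -> nat) :
  ((\sum_(lo <= k < hi) (a k * c k + b k * d k))%N)%:Z
  - ((\sum_(lo <= k < hi) (a k * d k + b k * c k))%N)%:Z
  = \sum_(lo <= k < hi) ((a k)%:Z - (b k)%:Z) * ((c k)%:Z - (d k)%:Z).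
Proof.
have PoszE (F : nat -> nat) :
    ((\sum_(lo <= k < hi) F k)%N)%:Z = \sum_(lo <= k < hi) (F k)%:Z.
  by rewrite -[LHS]intz sumMz; apply: eq_bigr => k _; rewrite intz.
rewrite !PoszE -sumrB; apply: eq_bigr => k _.
rewrite !PoszD !PoszM; ring.
Qed.

Lemma Ccount_union Q R n : Ccount (rod_union Q R) n = Ccount Q n + Ccount R n.
Proof. by rewrite /Ccount /= !PoszD opprD addrACA. Qed.

Lemma Ccount_bar Q n : Ccount (rod_bar Q) n = - Ccount Q n.
Proof. by rewrite /Ccount /= opprB. Qed.

Lemma Ccount_prod Q R n :
  Ccount (rod_prod Q R) n = \sum_(1 <= k < n) Ccount Q k * Ccount R (n - k).
Proof. exact: Posz_sum_cross. Qed.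

Definition rodset_of (h : nat -> int) : rodset :=
  RodSet (fun n => if 0 <= h n then `|h n|%N else 0%N)
         (fun n => if 0 <= h n then 0%N else `|h n|%N).

Lemma Ccount_rodset_of h n : Ccount (rodset_of h) n = h n.
Proof. by rewrite /Ccount /=; case: (h n) => k /=; rewrite ?subr0 // NegzE sub0r. Qed.

Lemma trainsPN_S R f n : trainsPN R f.+1 n.+1 =
  ((\sum_(1 <= l < n.+2)
      (npos R l * (trainsPN R f (n.+1 - l)).1 + nneg R l * (trainsPN R f (n.+1 - l)).2))%N,
   (\sum_(1 <= l < n.+2)
      (npos R l * (trainsPN R f (n.+1 - l)).2 + nneg R l * (trainsPN R f (n.+1 - l)).1))%N).
Proof. by []. Qed.

Lemma trainsPN_fuelS R f n : (n <= f)%N -> trainsPN R f.+1 n = trainsPN R f n.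
Proof.
elim: f n => [|f IH] [|n] hn //.
rewrite trainsPN_S [RHS]trainsPN_S.
congr pair; apply: eq_big_nat => l /andP[l_gt0 l_le]; rewrite IH //; lia.
Qed.

Lemma trainsPN_fuel R f n : (n <= f)%N -> trainsPN R f n = trainsPN R n n.
Proof.
elim: f => [|f IH] hn; first by have -> : n = 0%N by lia.
have [-> // | ne_nf] := eqVneq n f.+1.
rewrite trainsPN_fuelS; last by lia.
apply: IH; lia.
Qed.

Definition Fnat (R : rodset) (n : nat) : int := Ftrains R n%:Z.

(* The coefficient of x^n in r(x) g(x). *)
Definition conv (R : rodset) (g : nat -> int) (n : nat) : int :=
  \sum_(1 <= k < n.+1) Ccount R k * g (n - k)%N.

Lemma eq_conv {R g h n} :
  (forall k, (k < n)%N -> g k = h k) -> conv R g n = conv R h n.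
Proof. by move=> gh; apply: eq_big_nat => k hk; rewrite gh //; lia. Qed.

Lemma Fnat_rec R n : (0 < n)%N -> Fnat R n = conv R (Fnat R) n.
Proof.
case: n => [//|n] _; rewrite /Fnat /Ftrains /= Posz_sum_cross.
apply: eq_big_nat => l /andP[l_gt0 l_le].
by rewrite /Ccount trainsPN_fuel //; lia.
Qed.

Lemma conv_max_len {R m} g {n} : is_max_len R m -> (m <= n)%N ->
  (forall k, (0 < k < m)%N -> g (n - k)%N = 0) ->
  conv R g n = Ccount R m * g (n - m)%N.
Proof.
move=> [m_gt0 [_ CR0]] le_mn g0.
rewrite /conv (bigD1_seq m) ?iota_uniq ?mem_index_iota //=; last by lia.
rewrite big_seq_cond big1 ?addr0 // => k /andP[]; rewrite mem_index_iota => hk ne_km.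
have [lt_km | lt_mk] := ltnP k m; first by rewrite g0 ?mulr0 //; lia.
by rewrite CR0 ?mul0r //; lia.
Qed.

(* The series 1 + q; the value q 0 is discarded. *)
Definition series1 (q : nat -> int) (n : nat) : int := if n == 0%N then 1 else q n.

Lemma rod_arrowP R Q S : rod_arrow R Q S <->
  forall n, (0 < n)%N ->
    Ccount S n = conv R (series1 (Ccount Q)) n - series1 (Ccount Q) n.
Proof.
have convE n : (0 < n)%N -> conv R (series1 (Ccount Q)) n
    = Ccount R n + \sum_(1 <= k < n) Ccount Q k * Ccount R (n - k).
  move=> n_gt0; rewrite /conv big_nat_recr /=; last by lia.
  rewrite subnn mulr1 addrC; congr (_ + _).
  rewrite big_nat_rev /=; apply: eq_big_nat => k /andP[k_gt0 k_lt].
  have -> : (1 + n - k.+1 = n - k)%N by lia.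
  have -> : (n - (n - k) = k)%N by lia.
  by rewrite /series1 ifF 1?mulrC //; lia.
have rhsE n : (0 < n)%N ->
    Ccount (rod_union (rod_union R (rod_bar Q)) (rod_prod Q R)) n
    = conv R (series1 (Ccount Q)) n - series1 (Ccount Q) n.
  move=> n_gt0; rewrite !Ccount_union Ccount_bar Ccount_prod convE // /series1 ifF; last by lia.
  by rewrite addrAC.
by split=> H n n_gt0; [rewrite -rhsE | rewrite rhsE]; rewrite // H.
Qed.

Lemma exists_last_nonzero (V : zmodType) (g : nat -> V) N : g 0%N != 0 ->
  (forall n, (N < n)%N -> g n = 0) ->
  exists d, g d != 0 /\ forall n, (d < n)%N -> g n = 0.
Proof.
elim: N => [|N IH] g0 gN; first by exists 0%N.
have [gN1 | ] := eqVneq (g N.+1) 0; last by exists N.+1.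
apply: IH => // n lt_Nn; have [-> // | ne] := eqVneq n N.+1.
apply: gN; lia.
Qed.

Section Necessity.

Context {R Q S : rodset} {a m : nat}.
Hypotheses (a_gt0 : (0 < a)%N) (maxR : is_max_len R m) (finQ : rod_finite Q)
  (shapeS : has_shape1 S a) (arrow : rod_arrow R Q S).

Let g := series1 (Ccount Q).
Let arrowE := proj1 (rod_arrowP R Q S) arrow.

Lemma arrow_series1_Fnat n : (n < a)%N -> g n = Fnat R n.
Proof.
elim/ltn_ind: n => -[// | n] IH lt_na.
have S0 : Ccount S n.+1 = 0.
  by have [// | /(shapeS n.+1 isT) eq_na] := eqVneq (Ccount S n.+1) 0; lia.
move/eqP: S0; rewrite arrowE // subr_eq0 -/g => /eqP <-.
rewrite Fnat_rec //; apply: eq_conv => k lt_kn; apply: IH; lia.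
Qed.

Lemma arrow_degree : exists2 d, (d + m)%N = a & forall n, (d < n)%N -> g n = 0.
Proof.
have [N QN] := finQ.
have [d [gd0 gd]] : exists d, g d != 0 /\ forall n, (d < n)%N -> g n = 0.
  apply: (@exists_last_nonzero _ _ N) => // n lt_Nn.
  by rewrite /g /series1 ifF ?QN //; lia.
have [m_gt0 [CRm _]] := maxR.
have dm_gt0 : (0 < d + m)%N by lia.
exists d => //; apply/(shapeS _ dm_gt0).
rewrite arrowE -/g // (conv_max_len _ maxR) ?leq_addl // => [|k hk]; last by apply: gd; lia.
by rewrite addnK [g (d + m)]gd ?subr0 ?mulf_neq0 //; lia.
Qed.

Lemma arrow_Fnat_gap n : (a - m < n < a)%N -> Fnat R n = 0.
Proof.
move=> hn; have [d da gd] := arrow_degree.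
by rewrite -arrow_series1_Fnat ?gd //; lia.
Qed.

Lemma arrow_Ccount_shape : Ccount S a = Fnat R a.
Proof.
have [d da gd] := arrow_degree.
have [m_gt0 _] := maxR.
rewrite arrowE -/g // [g a]gd ?subr0; last by lia.
rewrite Fnat_rec //; apply: eq_conv => k lt_ka; exact: arrow_series1_Fnat.
Qed.

End Necessity.

Lemma arrow_of_Fnat_gap R a m : (0 < a)%N -> is_max_len R m -> (m <= a)%N ->
  (forall n, (a - m < n < a)%N -> Fnat R n = 0) -> Fnat R a != 0 ->
  exists Q S, rod_finite Q /\ has_shape1 S a /\ rod_arrow R Q S.
Proof.
move=> a_gt0 maxR le_ma gap Fa0; have [m_gt0 _] := maxR.
pose G n := if (n <= a - m)%N then Fnat R n else 0.
have GF n : (n < a)%N -> G n = Fnat R n.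
  by rewrite /G; case: ifP => // /negbT ? ?; rewrite gap //; lia.
have G1 : series1 (Ccount (rodset_of G)) =1 G.
  by case=> [|n]; rewrite /series1 ?Ccount_rodset_of.
exists (rodset_of G), (rodset_of (fun n => if n == a then Fnat R a else 0)).
split; first by exists a => n lt_an; rewrite Ccount_rodset_of /G ifF //; lia.
split.
  move=> n _; rewrite Ccount_rodset_of /=.
  by case: (eqVneq n a) => [-> | ne_na]; split => // eq_na; case/eqP: ne_na.
apply/rod_arrowP => n n_gt0; rewrite Ccount_rodset_of (eq_conv (fun k _ => G1 k)) G1.
have [lt_na | le_an] := ltnP n a.
  rewrite ifF; last by lia.
  by rewrite (eq_conv (fun k hk => GF k (ltn_trans hk lt_na))) -Fnat_rec // GF // subrr.
have -> : G n = 0 by rewrite /G ifF //; lia.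
rewrite subr0.
have le_mn : (m <= n)%N by lia.
rewrite (conv_max_len _ maxR le_mn) => [|k hk]; last by rewrite /G ifF //; lia.
case: (eqVneq n a) => [-> | ne_na]; last by rewrite /G ifF ?mulr0 //; lia.
rewrite Fnat_rec // (conv_max_len _ maxR) // => [|k hk]; last by apply: gap; lia.
by rewrite /G ifT.
Qed.

Lemma Ftrains_gap_shift {R a m} : (m <= a)%N ->
  (forall i : nat, (1 <= i <= m - 1)%N -> Ftrains R (a%:Z - i%:Z) = 0) <->
  (forall n, (a - m < n < a)%N -> Fnat R n = 0).
Proof.
move=> le_ma; split=> H x hx.
  by have := H (a - x)%N; rewrite subzn ?subKn //; [apply; lia | lia | lia].
by rewrite subzn; [apply: H; lia | lia].
Qed.

Theorem mainTheorem15 (R : rodset) (a m : nat) :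
  rod_finite R -> ~ rod_equiv R rod_empty -> (0 < a)%N -> is_max_len R m ->
  ((exists Q S : rodset, rod_finite Q /\ has_shape1 S a /\ rod_arrow R Q S) <->
   ((forall i : nat, (1 <= i <= m - 1)%N -> Ftrains R (a%:Z - i%:Z) = 0) /\
    Ftrains R a%:Z != 0)) /\
  (forall Q S : rodset, rod_finite Q -> has_shape1 S a -> rod_arrow R Q S ->
     Ccount S a = Ftrains R a%:Z).
Proof.
move=> _ _ a_gt0 maxR.
split; last by move=> Q S finQ shapeS; exact: (arrow_Ccount_shape a_gt0 maxR finQ shapeS).
split.
  move=> [Q [S [finQ [shapeS arrow]]]].
  have [d da _] := arrow_degree a_gt0 maxR finQ shapeS arrow.
  rewrite Ftrains_gap_shift; last by lia.
  split; first exact: arrow_Fnat_gap arrow.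
  by rewrite -[Ftrains _ _](arrow_Ccount_shape a_gt0 maxR finQ shapeS arrow); apply/(shapeS _ a_gt0).
move=> [gap Fa0].
have le_ma : (m <= a)%N.
  rewrite leqNgt; apply/negP => lt_am.
  by have /eqP := gap a ltac:(lia); rewrite subrr.
move/(Ftrains_gap_shift le_ma): gap => gap.
exact: arrow_of_Fnat_gap a_gt0 maxR le_ma gap Fa0.
Qed.
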